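(* Let $f\subseteq\mathcal{X}\times\mathcal{Y}\times\mathcal{Z}$ be a relation (finite sets), $X'Y'$ a distribution on $\mathcal{X}\times\mathcal{Y}$, $z\in\mathcal{Z}$, $\beta:=\Pr_{(x,y)\leftarrow X'Y'}[f(x,y)=\{z\}]$, and $c\ge1$. Let $\varepsilon,\varepsilon',\delta>0$ satisfy $(\delta+2\varepsilon)/(\beta-3\varepsilon)<(1+\varepsilon')\delta/\beta$. Let $\Pi$ be a zero-communication public-coin protocol run on input $(x,y)\leftarrow X'Y'$, with public coin $R$ (independent of the input), Alice's output $A=a(x,R)\in\mathcal{Z}\cup\{\bot\}$ and Bob's output $B=b(y,R)\in\mathcal{Z}\cup\{\bot\}$. Let $X^1Y^1A^1B^1R^1$ denote the distribution of $X'Y'ABR$ conditioned on the event $A=B\neq\bot$. Suppose 1. $\Pr[A=B\neq\bot]\ge2^{-c}$; 2. $\|X^1Y^1-X'Y'\|_1\le\varepsilon$; 3. $\Pr[(X^1,Y^1,A^1)\in f]\ge1-\varepsilon$. Then $\widetilde{\mathrm{srec}}^{z,X'Y'}_{(1+\varepsilon')\delta/\beta,\;\delta}(f)<c/\varepsilon$.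
   Context: $\|\cdot\|_1$ denotes half the $\ell_1$ norm (total variation distance). $f(x,y):=\{z:(x,y,z)\in f\}$, $g^{-1}(z):=\{(x,y):(x,y,z)\in g\}$. Smooth rectangle bound: $\widetilde{\mathrm{rec}}^{z,\lambda}_{\varepsilon}(g):=\min\{\log_2(1/\lambda(R)) : R\text{ a rectangle with }\lambda(R)>0,\ \lambda(g^{-1}(z)\cap R)\ge(1-\varepsilon)\lambda(R)\}$ and $\widetilde{\mathrm{srec}}^{z,\lambda}_{\varepsilon,\delta}(f):=\max\{\widetilde{\mathrm{rec}}^{z,\lambda}_{\varepsilon}(g): g\subseteq\mathcal{X}\times\mathcal{Y}\times\mathcal{Z},\ \Pr_{(x,y)\leftarrow\lambda}[f(x,y)\neq g(x,y)]\le\delta\}$. *)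

From mathcomp Require Import all_boot.
From Stdlib Require Import Reals.
Set Implicit Arguments. Unset Strict Implicit. Unset Printing Implicit Defensive.

Local Open Scope R_scope.

Definition sumR {T : finType} (F : T -> R) : R := \big[Rplus/0%R]_(t : T) F t.

Definition ind (b : bool) : R := if b then 1 else 0.

Definition is_distr {T : finType} (p : T -> R) : Prop :=
  (forall t, 0 <= p t) /\ sumR p = 1.

Definition log2 (x : R) : R := ln x / ln 2.

Definition tvdist {T : finType} (p q : T -> R) : R :=
  / 2 * sumR (fun t => Rabs (p t - q t)).

(* relations f ⊆ X×Y×Z are boolean predicates f x y z *)
Definition same_image {X Y Z : finType} (f g : X -> Y -> Z -> bool) (x : X) (y : Y)
  : bool := [forall u : Z, f x y u == g x y u].

Definition is_singleton_at {X Y Z : finType} (f : X -> Y -> Z -> bool) (z : Z)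
  (x : X) (y : Y) : bool := [forall u : Z, f x y u == (u == z)].

Definition beta {X Y Z : finType} (f : X -> Y -> Z -> bool) (lam : X * Y -> R) (z : Z)
  : R := sumR (fun xy : X * Y => lam xy * ind (is_singleton_at f z xy.1 xy.2)).

Definition rect_mass {X Y : finType} (lam : X * Y -> R) (S : {set X}) (T : {set Y})
  : R := sumR (fun xy : X * Y => lam xy * ind ((xy.1 \in S) && (xy.2 \in T))).

Definition rect_mass_z {X Y Z : finType} (lam : X * Y -> R) (g : X -> Y -> Z -> bool)
  (z : Z) (S : {set X}) (T : {set Y}) : R :=
  sumR (fun xy : X * Y => lam xy * ind [&& xy.1 \in S, xy.2 \in T & g xy.1 xy.2 z]).

(* rec^{z,lam}_eps(g) < t, where rec is the minimum over admissible rectangles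
   of log2(1/lam(R)) (minimum of the empty set = +infinity). Since there are
   finitely many rectangles, "min < t" is exactly "some admissible rectangle
   has value < t". *)
Definition rec_lt {X Y Z : finType} (g : X -> Y -> Z -> bool) (z : Z)
  (lam : X * Y -> R) (eps t : R) : Prop :=
  exists (S : {set X}) (T : {set Y}),
    0 < rect_mass lam S T /\
    (1 - eps) * rect_mass lam S T <= rect_mass_z lam g z S T /\
    log2 (1 / rect_mass lam S T) < t.

Definition prob_differ {X Y Z : finType} (f g : X -> Y -> Z -> bool) (lam : X * Y -> R)
  : R := sumR (fun xy : X * Y => lam xy * ind (~~ same_image f g xy.1 xy.2)).

(* srec^{z,lam}_{eps,delta}(f) < t : srec is the maximum of rec over the
   (finitely many) relations g with Pr[f <> g] <= delta; max < t iff every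
   such g has rec < t. *)
Definition srec_lt {X Y Z : finType} (f : X -> Y -> Z -> bool) (z : Z)
  (lam : X * Y -> R) (eps delta t : R) : Prop :=
  forall g : X -> Y -> Z -> bool, prob_differ f g lam <= delta -> rec_lt g z lam eps t.

(* ---- zero-communication public-coin protocol ----
   Coin space W (finite) with distribution mu, independent of the input;
   Alice outputs a x w, Bob outputs b y w, None standing for ⊥. *)

Definition agree {X Y Z W : finType} (a : X -> W -> option Z) (b : Y -> W -> option Z)
  (x : X) (y : Y) (w : W) : bool := (a x w == b y w) && (a x w != None).

Definition prob_agree {X Y Z W : finType} (lam : X * Y -> R) (mu : W -> R)
  (a : X -> W -> option Z) (b : Y -> W -> option Z) : R :=
  sumR (fun p : (X * Y) * W => lam p.1 * mu p.2 * ind (agree a b p.1.1 p.1.2 p.2)).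

Definition cond_XY {X Y Z W : finType} (lam : X * Y -> R) (mu : W -> R)
  (a : X -> W -> option Z) (b : Y -> W -> option Z) (xy : X * Y) : R :=
  sumR (fun w : W => lam xy * mu w * ind (agree a b xy.1 xy.2 w))
  / prob_agree lam mu a b.

Definition prob_cond_in_f {X Y Z W : finType} (f : X -> Y -> Z -> bool)
  (lam : X * Y -> R) (mu : W -> R)
  (a : X -> W -> option Z) (b : Y -> W -> option Z) : R :=
  sumR (fun p : (X * Y) * W =>
          lam p.1 * mu p.2 *
          ind (agree a b p.1.1 p.1.2 p.2 &&
               match a p.1.1 p.2 with Some u => f p.1.1 p.1.2 u | None => false end))
  / prob_agree lam mu a b.

(* For every coin value w, the inputs on which Alice (resp. Bob) outputs z form
   a set S_w (resp. T_w); the rectangle R_w := S_w x T_w is the candidate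
   witness.  Averaged over the coin, Pr[A = B = z] = E_w lam(R_w), and the mass
   of the event "A = B = z but (x,y,z) is not in g" is
   E_w (lam(R_w) - lam(g^-1(z) n R_w)).

   Conditioning on agreement moves every input event by at most eps (total
   variation), so with P := Pr[A = B <> bot]:
     - Pr[A = B = z] >= P (beta - 2 eps), since f(x,y) = {z} together with
       (x,y,A) in f forces A = z;
     - the bad mass is <= P (delta + 2 eps), since an agreed output z off g
       means that (x,y,A) is not in f or that f and g differ at (x,y).
   Averaging over w then yields a rectangle R_w of mass > 2^(-c/eps)
   (as 2^(-c/eps) <= eps 2^(-c) <= eps P) on which g^-1(z) has relative mass
   >= 1 - (1 + eps') delta / beta, i.e. rec < c / eps for every g that is
   delta-close to f. *)

From Pilot Require Import Defs.
From HB Require Import structures.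
From mathcomp Require Import all_boot.
From Stdlib Require Import Reals Lra Classical.
Set Implicit Arguments. Unset Strict Implicit. Unset Printing Implicit Defensive.
Local Open Scope R_scope.
(* The event indicator of Defs, which an imported library name would otherwise shadow. *)
Local Notation ind := Defs.ind.

HB.instance Definition _ :=
  Monoid.isComLaw.Build R 0 Rplus (fun x y z => esym (Rplus_assoc x y z)) Rplus_comm Rplus_0_l.

Lemma sumR_ext (T : finType) (F G : T -> R) : (forall t, F t = G t) -> sumR F = sumR G.
Proof. by move=> FG; apply: eq_bigr => t _. Qed.

Lemma sumR_plus (T : finType) (F G : T -> R) :
  sumR (fun t => F t + G t) = sumR F + sumR G.
Proof. exact: big_split. Qed.

Lemma sumR_scal (T : finType) (k : R) (F : T -> R) :
  sumR (fun t => k * F t) = k * sumR F.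
Proof.
rewrite /sumR; elim/big_rec2: _ => [|t x y _ ->]; first by rewrite Rmult_0_r.
by rewrite Rmult_plus_distr_l.
Qed.

Lemma sumR_minus (T : finType) (F G : T -> R) :
  sumR (fun t => F t - G t) = sumR F - sumR G.
Proof.
rewrite (sumR_ext (G := fun t => F t + (-1) * G t)); last by move=> t; ring.
by rewrite sumR_plus sumR_scal; ring.
Qed.

Lemma sumR_le (T : finType) (F G : T -> R) :
  (forall t, F t <= G t) -> sumR F <= sumR G.
Proof.
move=> FG; rewrite /sumR; elim/big_ind2: _ => // [|x1 x2 y1 y2]; first exact: Rle_refl.
exact: Rplus_le_compat.
Qed.

Lemma sumR_abs (T : finType) (F : T -> R) : Rabs (sumR F) <= sumR (fun t => Rabs (F t)).
Proof.
rewrite /sumR; elim/big_ind2: _ => [|x1 x2 y1 y2 h1 h2|t _]; last exact: Rle_refl.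
- by rewrite Rabs_R0; apply: Rle_refl.
- by apply: Rle_trans (Rabs_triang _ _) _; apply: Rplus_le_compat.
Qed.

Lemma sumR_pair (A B : finType) (F : A * B -> R) :
  sumR F = sumR (fun x => sumR (fun y => F (x, y))).
Proof. by rewrite /sumR pair_big; apply: eq_bigr => -[]. Qed.

Lemma sumR_swap (A B : finType) (F : A -> B -> R) :
  sumR (fun x => sumR (fun y => F x y)) = sumR (fun y => sumR (fun x => F x y)).
Proof. exact: exchange_big. Qed.

Lemma sumR_lt_exists (T : finType) (F G : T -> R) :
  sumR F < sumR G -> exists t, F t < G t.
Proof.
move=> FG; apply: NNPP => none; suff: sumR G <= sumR F by lra.
by apply: sumR_le => t; apply: Rnot_lt_le => lt; apply: none; exists t.
Qed.

Definition wmass {T : finType} (m : T -> R) (E : T -> bool) : R :=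
  sumR (fun t => m t * ind (E t)).

Lemma ind_andb (b1 b2 : bool) : ind (b1 && b2) = ind b1 * ind b2.
Proof. by case: b1; case: b2; rewrite /ind /=; ring. Qed.

Section WeightedMass.
Variables (T : finType) (m : T -> R).

Lemma wmass_predT : wmass m (fun _ => true) = sumR m.
Proof. by apply: sumR_ext => t; rewrite /ind Rmult_1_r. Qed.

Lemma wmass_split (E F : T -> bool) :
  wmass m E = wmass m (fun t => E t && F t) + wmass m (fun t => E t && ~~ F t).
Proof.
rewrite /wmass -sumR_plus; apply: sumR_ext => t.
by rewrite /ind; case: (E t); case: (F t) => /=; ring.
Qed.

Lemma wmass_abs (E : T -> bool) : Rabs (wmass m E) <= wmass (fun t => Rabs (m t)) E.
Proof.
apply: Rle_trans (sumR_abs _) _; apply: sumR_le => t.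
by rewrite Rabs_mult /ind; case: (E t); rewrite ?Rabs_R1 ?Rabs_R0; apply: Rle_refl.
Qed.

Lemma wmass_ext (E F : T -> bool) :
  (forall t, E t = F t) -> wmass m E = wmass m F.
Proof. by move=> EF; apply: sumR_ext => t; rewrite EF. Qed.

Hypothesis m_ge0 : forall t, 0 <= m t.

Lemma wmass_sub (E F : T -> bool) : (forall t, E t -> F t) -> wmass m E <= wmass m F.
Proof.
move=> EF; apply: sumR_le => t; apply: Rmult_le_compat_l; first exact: m_ge0.
by rewrite /ind; case: (boolP (E t)) => [/EF ->|_]; case: (F t); lra.
Qed.

Lemma wmass_union (E F G : T -> bool) : (forall t, G t -> E t || F t) ->
  wmass m G <= wmass m E + wmass m F.
Proof.
move=> sub; rewrite /wmass -sumR_plus; apply: sumR_le => t.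
rewrite -Rmult_plus_distr_l; apply: Rmult_le_compat_l; first exact: m_ge0.
move: (sub t); rewrite /ind.
by case: (G t); case: (E t); case: (F t) => //= h; try lra; have := h isT.
Qed.

Lemma wmass_inter (E F G : T -> bool) : (forall t, E t -> G t) -> (forall t, F t -> G t) ->
  wmass m E + wmass m F - wmass m G <= wmass m (fun t => E t && F t).
Proof.
move=> EG FG; rewrite /wmass -sumR_plus -sumR_minus; apply: sumR_le => t.
rewrite -Rmult_plus_distr_l -Rmult_minus_distr_l; apply: Rmult_le_compat_l; first exact: m_ge0.
move: (EG t) (FG t); rewrite /ind.
case: (E t); case: (F t); case: (G t) => //= h1 h2; try lra.
all: by [have := h1 isT | have := h2 isT].
Qed.

End WeightedMass.

Lemma tvdist_event (T : finType) (q l : T -> R) (E : T -> bool) :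
  sumR q = sumR l -> Rabs (wmass q E - wmass l E) <= tvdist q l.
Proof.
move=> same_total; pose d t := q t - l t; pose ad t := Rabs (d t).
have -> : wmass q E - wmass l E = wmass d E.
  by rewrite /wmass -sumR_minus; apply: sumR_ext => t; rewrite /d; ring.
have split_d : sumR d = wmass d E + wmass d (fun t => ~~ E t).
  by rewrite -wmass_predT (wmass_split d _ E).
have split_ad : sumR ad = wmass ad E + wmass ad (fun t => ~~ E t).
  by rewrite -wmass_predT (wmass_split ad _ E).
have d_total : sumR d = 0 by rewrite sumR_minus same_total; ring.
have abs_in : Rabs (wmass d E) <= wmass ad E := wmass_abs d E.
have abs_out : Rabs (wmass d (fun t => ~~ E t)) <= wmass ad (fun t => ~~ E t).
  exact: wmass_abs.
have -> : tvdist q l = / 2 * sumR ad by [].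
have : Rabs (wmass d (fun t => ~~ E t)) = Rabs (wmass d E).
  by rewrite -Rabs_Ropp; congr Rabs; lra.
lra.
Qed.

Lemma Rpower2_pos (x : R) : 0 < Rpower 2 x.
Proof. exact: exp_pos. Qed.

Lemma ln2_ge_half : 1 <= 2 * ln 2.
Proof.
rewrite -[2 * ln 2]/(INR 2 * ln 2) -ln_pow; last lra.
rewrite -[X in X <= _]ln_exp; left; apply: ln_increasing; first exact: exp_pos.
by have := exp_le_3; rewrite /= Rmult_1_r; lra.
Qed.

(* x <= 2^(x-1) for x >= 2, from exp u >= 1 + u and 2 ln 2 >= 1. *)
Lemma le_Rpower2_pred (x : R) : 2 <= x -> x <= Rpower 2 (x - 1).
Proof.
move=> x_ge2.
have -> : x - 1 = 1 + (x - 2) by ring.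
rewrite Rpower_plus Rpower_1; last lra.
have : 1 + (x - 2) * ln 2 <= Rpower 2 (x - 2) by exact: exp_ineq1_le.
have := ln2_ge_half; nra.
Qed.

Lemma Rpower2_scaled_le (c e : R) : 1 <= c -> 0 < e -> e <= / 2 ->
  Rpower 2 (- (c / e)) <= e * Rpower 2 (- c).
Proof.
move=> c_ge1 e_gt0 e_le.
have inv_ge2 : 2 <= / e.
  by rewrite -[2]Rinv_inv; apply: Rinv_le_contravar; lra.
have -> : - (c / e) = - c + - (c / e - c) by ring.
rewrite Rpower_plus Rmult_comm; apply: Rmult_le_compat_r; first exact: Rlt_le (Rpower2_pos _).
have key : / e <= Rpower 2 (c / e - c).
  apply: Rle_trans (le_Rpower2_pred inv_ge2) _; apply: Rle_Rpower; first lra.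
  have -> : c / e - c = c * (/ e - 1) by rewrite /Rdiv; ring.
  nra.
rewrite Rpower_Ropp -{2}(Rinv_inv e).
exact: Rinv_le_contravar (Rinv_0_lt_compat _ e_gt0) key.
Qed.

Lemma log2_inv_lt (k r : R) : Rpower 2 (- k) < r -> log2 (1 / r) < k.
Proof.
move=> lt; have r_gt0 : 0 < r by have := Rpower2_pos (- k); lra.
have ln2_gt0 : 0 < ln 2 by have := ln2_ge_half; lra.
have : ln (Rpower 2 (- k)) < ln r by apply: ln_increasing => //; exact: Rpower2_pos.
rewrite /Rpower ln_exp /log2 /Rdiv Rmult_1_l ln_Rinv // => lt_ln.
apply: (Rmult_lt_reg_r (ln 2)) => //; rewrite Rmult_assoc Rinv_l; lra.
Qed.

Lemma averaging (W : finType) (mu : W -> R) (r rz : W -> R) (e t : R) :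
  is_distr mu -> 0 <= e -> (forall w, rz w <= r w) -> 0 <= t ->
  sumR (fun w => mu w * (r w - rz w)) < e * (sumR (fun w => mu w * r w) - t) ->
  exists w, t < r w /\ (1 - e) * r w <= rz w.
Proof.
move=> [mu_ge0 mu_total] e_ge0 rz_le t_ge0 gap.
have [w lt_w] : exists w, mu w * (r w - rz w) < e * (mu w * (r w - t)).
  apply: sumR_lt_exists; apply: Rlt_le_trans gap _; apply: Req_le.
  rewrite sumR_scal; congr (e * _).
  rewrite (sumR_ext (F := fun w => mu w * (r w - t)) (G := fun w => mu w * r w - t * mu w));
    last by move=> w; ring.
  by rewrite sumR_minus sumR_scal mu_total Rmult_1_r.
have mu_ge0_w := mu_ge0 w; have rz_le_w := rz_le w.
have t_lt : t < r w.
  apply: Rnot_le_lt => r_le; move: lt_w; apply: Rle_not_lt.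
  have : 0 <= mu w * (r w - rz w) by apply: Rmult_le_pos; lra.
  have : 0 <= e * (mu w * (t - r w)) by apply: Rmult_le_pos => //; apply: Rmult_le_pos; lra.
  lra.
have mu_gt0 : 0 < mu w.
  case: mu_ge0_w => // mu0; move: lt_w; rewrite -mu0; lra.
exists w; split => //.
apply: (Rmult_le_reg_l (mu w)) => //.
have : 0 <= e * mu w * t by apply: Rmult_le_pos => //; apply: Rmult_le_pos.
nra.
Qed.

Lemma ratio_close_bounds (A P q e : R) : 0 < P -> Rabs (A / P - q) <= e ->
  P * (q - e) <= A /\ A <= P * (q + e).
Proof.
move=> P_gt0 close; have -> : A = P * (A / P) by field; lra.
have := Rle_abs (A / P - q); have := Rle_abs (- (A / P - q)); rewrite Rabs_Ropp.
by split; apply: Rmult_le_compat_l; lra.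
Qed.

Lemma rect_mass_z_le (X Y Z : finType) (lam : X * Y -> R) (g : X -> Y -> Z -> bool) (z : Z)
  (S : {set X}) (T : {set Y}) :
  (forall xy, 0 <= lam xy) -> rect_mass_z lam g z S T <= rect_mass lam S T.
Proof. by move=> lam_ge0; apply: (wmass_sub lam_ge0) => xy /and3P[xS yT _]; apply/andP. Qed.

Section Protocol.
Variables (X Y Z W : finType) (lam : X * Y -> R) (mu : W -> R).
Variables (a : X -> W -> option Z) (b : Y -> W -> option Z).

Definition joint (p : (X * Y) * W) : R := lam p.1 * mu p.2.

Definition agree_ev (p : (X * Y) * W) : bool := agree a b p.1.1 p.1.2 p.2.

Definition in_f_ev (f : X -> Y -> Z -> bool) (p : (X * Y) * W) : bool :=
  agree_ev p && match a p.1.1 p.2 with Some u => f p.1.1 p.1.2 u | None => false end.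

Definition both_z_ev (z : Z) (p : (X * Y) * W) : bool :=
  (a p.1.1 p.2 == Some z) && (b p.1.2 p.2 == Some z).

Local Notation P := (prob_agree lam mu a b).

Lemma cond_XY_event (h : X * Y -> bool) :
  wmass (cond_XY lam mu a b) h = wmass joint (fun p => agree_ev p && h p.1) / P.
Proof.
rewrite /wmass /Rdiv Rmult_comm -sumR_scal [RHS]sumR_pair; apply: sumR_ext => xy.
rewrite /cond_XY /Rdiv Rmult_assoc Rmult_comm -sumR_scal; apply: sumR_ext => w.
by rewrite /joint /agree_ev ind_andb /=; ring.
Qed.

Lemma prob_agreeE : P = wmass joint agree_ev.
Proof. by []. Qed.

Lemma cond_XY_close (h : X * Y -> bool) (eps : R) :
  sumR lam = 1 -> 0 < P -> tvdist (cond_XY lam mu a b) lam <= eps ->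
  Rabs (wmass joint (fun p => agree_ev p && h p.1) / P - wmass lam h) <= eps.
Proof.
move=> lam_total P_gt0 tv; rewrite -cond_XY_event; apply: Rle_trans tv.
apply: tvdist_event; rewrite lam_total -wmass_predT cond_XY_event.
rewrite (wmass_ext _ (F := agree_ev)) => [|p]; last by rewrite andbT.
by rewrite -prob_agreeE; field; lra.
Qed.

Section Events.
Variables (f g : X -> Y -> Z -> bool) (z : Z).

Lemma singleton_agreement_outputs_z (p : (X * Y) * W) :
  agree_ev p -> is_singleton_at f z p.1.1 p.1.2 -> in_f_ev f p -> both_z_ev z p.
Proof.
case: p => [[x y] w]; rewrite /in_f_ev /agree_ev /agree /both_z_ev /=.
case: (a x w) => [u|]; last by rewrite andbF.
move=> /andP[/eqP <- _] /forallP /(_ u) single /andP[_ fu].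
have /eqP -> : u == z by move: single; rewrite fu => /eqP <-.
by rewrite eqxx.
Qed.

Lemma off_g_cases (p : (X * Y) * W) :
  both_z_ev z p -> ~~ g p.1.1 p.1.2 z ->
  (agree_ev p && ~~ in_f_ev f p) || (agree_ev p && ~~ same_image f g p.1.1 p.1.2).
Proof.
case: p => [[x y] w]; rewrite /in_f_ev /agree_ev /agree /both_z_ev /=.
move=> /andP[/eqP -> /eqP ->] not_g; rewrite eqxx /=.
case: (boolP (f x y z)) => fz //=.
by apply/negP => /forallP /(_ z) /eqP; rewrite fz (negbTE not_g).
Qed.

Variable eps : R.
Hypotheses (lam_distr : is_distr lam) (mu_ge0 : forall w, 0 <= mu w).
Hypotheses (P_gt0 : 0 < P) (tv_close : tvdist (cond_XY lam mu a b) lam <= eps).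
Hypothesis in_f_lb : 1 - eps <= prob_cond_in_f f lam mu a b.

Lemma joint_ge0 (p : (X * Y) * W) : 0 <= joint p.
Proof. by apply: Rmult_le_pos; [case: lam_distr|]. Qed.

Lemma agree_singleton_lb :
  P * (beta f lam z - eps) <= wmass joint (fun p => agree_ev p && is_singleton_at f z p.1.1 p.1.2).
Proof.
have close := cond_XY_close (fun xy => is_singleton_at f z xy.1 xy.2) lam_distr.2 P_gt0 tv_close.
exact: (ratio_close_bounds P_gt0 close).1.
Qed.

Lemma agree_differ_ub :
  wmass joint (fun p => agree_ev p && ~~ same_image f g p.1.1 p.1.2) <= P * (prob_differ f g lam + eps).
Proof.
have close := cond_XY_close (fun xy => ~~ same_image f g xy.1 xy.2) lam_distr.2 P_gt0 tv_close.
exact: (ratio_close_bounds P_gt0 close).2.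
Qed.

Lemma in_f_mass_lb : P * (1 - eps) <= wmass joint (in_f_ev f).
Proof.
have -> : wmass joint (in_f_ev f) = P * prob_cond_in_f f lam mu a b.
  by rewrite /prob_cond_in_f -/(wmass joint (in_f_ev f)); field; lra.
exact: Rmult_le_compat_l (Rlt_le _ _ P_gt0) in_f_lb.
Qed.

Lemma both_z_lb : P * (beta f lam z - 2 * eps) <= wmass joint (both_z_ev z).
Proof.
pose agree_single p := agree_ev p && is_singleton_at f z p.1.1 p.1.2.
have inter : wmass joint agree_single + wmass joint (in_f_ev f) - P
    <= wmass joint (fun p => agree_single p && in_f_ev f p).
  by rewrite prob_agreeE; apply: (wmass_inter joint_ge0) => p; rewrite /in_f_ev => /andP[].
have sub : wmass joint (fun p => agree_single p && in_f_ev f p) <= wmass joint (both_z_ev z).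
  apply: (wmass_sub joint_ge0) => p /andP[/andP[agr single] in_f].
  exact: singleton_agreement_outputs_z.
have := agree_singleton_lb; have := in_f_mass_lb; rewrite -/agree_single; lra.
Qed.

Lemma off_g_mass_ub :
  wmass joint (fun p => both_z_ev z p && ~~ g p.1.1 p.1.2 z) <= P * (prob_differ f g lam + 2 * eps).
Proof.
have union : wmass joint (fun p => both_z_ev z p && ~~ g p.1.1 p.1.2 z)
    <= wmass joint (fun p => agree_ev p && ~~ in_f_ev f p)
       + wmass joint (fun p => agree_ev p && ~~ same_image f g p.1.1 p.1.2).
  by apply: (wmass_union joint_ge0) => p /andP[both_z not_g]; exact: off_g_cases.
have agree_split := wmass_split joint agree_ev (in_f_ev f).
have in_f_in_agree : wmass joint (fun p => agree_ev p && in_f_ev f p) = wmass joint (in_f_ev f).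
  by apply: wmass_ext => p; rewrite /in_f_ev andbA andbb.
rewrite -prob_agreeE in_f_in_agree in agree_split.
have := in_f_mass_lb; have := agree_differ_ub; lra.
Qed.

End Events.

Definition alice_z_set (z : Z) (w : W) : {set X} := [set x | a x w == Some z].
Definition bob_z_set (z : Z) (w : W) : {set Y} := [set y | b y w == Some z].

Lemma both_z_rect (z : Z) : wmass joint (both_z_ev z) =
  sumR (fun w => mu w * rect_mass lam (alice_z_set z w) (bob_z_set z w)).
Proof.
rewrite /wmass sumR_pair sumR_swap; apply: sumR_ext => w; rewrite /rect_mass -sumR_scal.
by apply: sumR_ext => xy; rewrite /joint /both_z_ev !inE /=; ring.
Qed.

Lemma both_z_g_rect (g : X -> Y -> Z -> bool) (z : Z) :
  wmass joint (fun p => both_z_ev z p && g p.1.1 p.1.2 z) =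
  sumR (fun w => mu w * rect_mass_z lam g z (alice_z_set z w) (bob_z_set z w)).
Proof.
rewrite /wmass sumR_pair sumR_swap; apply: sumR_ext => w; rewrite /rect_mass_z -sumR_scal.
by apply: sumR_ext => xy; rewrite /joint /both_z_ev !inE /= andbA; ring.
Qed.

Lemma off_g_rect (g : X -> Y -> Z -> bool) (z : Z) :
  wmass joint (fun p => both_z_ev z p && ~~ g p.1.1 p.1.2 z) =
  sumR (fun w => mu w * (rect_mass lam (alice_z_set z w) (bob_z_set z w)
                         - rect_mass_z lam g z (alice_z_set z w) (bob_z_set z w))).
Proof.
have split_g := wmass_split joint (both_z_ev z) (fun p => g p.1.1 p.1.2 z).
rewrite both_z_rect both_z_g_rect in split_g.
rewrite (sumR_ext (G := fun w => mu w * rect_mass lam (alice_z_set z w) (bob_z_set z w)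
   - mu w * rect_mass_z lam g z (alice_z_set z w) (bob_z_set z w))) => [|w]; last by ring.
by rewrite sumR_minus; lra.
Qed.

End Protocol.

(* The numerical core: the mass bounds and the hypothesis on delta, eps, eps'
   give exactly the gap required by the averaging lemma. *)
Lemma averaging_gap (P t bad good e d bt e1 : R) :
  0 < P -> t <= e * P -> bad <= P * (d + 2 * e) -> P * (bt - 2 * e) <= good ->
  0 < bt - 3 * e -> 0 <= e1 -> (d + 2 * e) / (bt - 3 * e) < e1 -> bad < e1 * (good - t).
Proof.
move=> P_gt0 t_le bad_le good_ge gap e1_ge0 ratio.
have lin : d + 2 * e < e1 * (bt - 3 * e).
  by move: ratio; rewrite /Rdiv; move/(Rmult_lt_compat_r _ _ _ gap); rewrite Rmult_assoc Rinv_l; lra.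
have : P * (d + 2 * e) < P * (e1 * (bt - 3 * e)) by apply: Rmult_lt_compat_l.
have : e1 * (P * (bt - 3 * e)) <= e1 * (good - t) by apply: Rmult_le_compat_l => //; lra.
lra.
Qed.


Theorem mainTheorem4 (X Y Z W : finType) (f : X -> Y -> Z -> bool)
  (lam : X * Y -> R) (z : Z) (c eps eps' delta : R)
  (mu : W -> R) (a : X -> W -> option Z) (b : Y -> W -> option Z) :
  is_distr lam -> is_distr mu ->
  (1 <= c)%R ->
  (0 < eps)%R -> (0 < eps')%R -> (0 < delta)%R ->
  (0 < beta f lam z - 3 * eps)%R ->
  ((delta + 2 * eps) / (beta f lam z - 3 * eps)
     < (1 + eps') * delta / beta f lam z)%R ->
  (Rpower 2 (- c) <= prob_agree lam mu a b)%R ->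
  (tvdist (cond_XY lam mu a b) lam <= eps)%R ->
  (1 - eps <= prob_cond_in_f f lam mu a b)%R ->
  srec_lt f z lam ((1 + eps') * delta / beta f lam z) delta (c / eps).
Proof.
move=> lam_distr mu_distr c_ge1 eps_gt0 eps'_gt0 delta_gt0 gap ratio agree_lb tv_close in_f_lb.
move=> g g_close; set e1 := (1 + eps') * delta / beta f lam z in ratio *.
have P_gt0 : 0 < prob_agree lam mu a b := Rlt_le_trans _ _ _ (Rpower2_pos _) agree_lb.
have beta_le1 : beta f lam z <= 1.
  by case: lam_distr => lam_ge0 <-; rewrite -wmass_predT; exact: wmass_sub.
have e1_ge0 : 0 <= e1.
  by apply: Rlt_le; apply: Rdiv_lt_0_compat; [apply: Rmult_lt_0_compat|]; lra.
set t := Rpower 2 (- (c / eps)).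
have t_le : t <= eps * prob_agree lam mu a b.
  apply: Rle_trans (Rpower2_scaled_le c_ge1 eps_gt0 _) _; first lra.
  exact: Rmult_le_compat_l (Rlt_le _ _ eps_gt0) agree_lb.
pose A w := alice_z_set a z w; pose B w := bob_z_set b z w.
have [w [t_lt admissible]] :
    exists w, t < rect_mass lam (A w) (B w) /\
              (1 - e1) * rect_mass lam (A w) (B w) <= rect_mass_z lam g z (A w) (B w).
  apply: (averaging mu_distr e1_ge0 (fun w => rect_mass_z_le g z (A w) (B w) lam_distr.1)
    (Rlt_le _ _ (Rpower2_pos _))).
  rewrite -off_g_rect -both_z_rect.
  have good_lb := both_z_lb z lam_distr mu_distr.1 P_gt0 tv_close in_f_lb.
  have bad_ub := off_g_mass_ub g z lam_distr mu_distr.1 P_gt0 tv_close in_f_lb.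
  apply: (averaging_gap P_gt0 t_le _ good_lb gap e1_ge0 ratio).
  by apply: Rle_trans bad_ub _; apply: Rmult_le_compat_l; lra.
exists (A w), (B w); split; first exact: Rlt_trans (Rpower2_pos _) t_lt.
by split=> //; exact: log2_inv_lt.
Qed.
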